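(* For every prime $p$ and every integer $q$ coprime to $p$, $$|\mathrm{def}(p;q,1)|\le |\mathrm{def}(p;1,1)|=\tfrac13(p-1)(p-2).$$
   Context: For $z\in\mathbb{R}$ define $((z))=z-[z]-\tfrac12$ if $z\notin\mathbb{Z}$ and $((z))=0$ if $z\in\mathbb{Z}$, where $[z]$ is the greatest integer $\le z$. For $q$ coprime to $p$ define $$\mathrm{def}(p;q,1)=-4p\sum_{k=0}^{p-1}\left(\left(\frac{k}{p}\right)\right)\left(\left(\frac{qk}{p}\right)\right).$$ *)

From HB Require Import structures.
From mathcomp Require Import all_boot all_order all_algebra.
Set Implicit Arguments. Unset Strict Implicit. Unset Printing Implicit Defensive.
Import Order.TTheory GRing.Theory Num.Theory.
Local Open Scope ring_scope.

Definition sawtooth (z : rat) : rat :=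
  if z \is a Num.int then 0 else z - (Num.floor z)%:~R - 2^-1.

Definition defpq (p : nat) (q : int) : rat :=
  - (4 * p%:R) * \sum_(0 <= k < p)
      sawtooth (k%:R / p%:R) * sawtooth ((q * k%:Z)%:~R / p%:R).

From HB Require Import structures.
From mathcomp Require Import all_boot all_order all_algebra.
From mathcomp Require Import ring lra zify.
Import Order.TTheory GRing.Theory Num.Theory.
Local Open Scope ring_scope.

(* Since q is invertible mod p, k |-> qk mod p permutes the residues, so
   def(p;q,1) is -4p times the sum of ((k/p)) ((s(k)/p)) for a permutation s.
   By 2|xy| <= x^2 + y^2 such a sum is bounded in absolute value by the sum of
   the squares ((k/p))^2, which is the value at the identity permutation,
   i.e. at q = 1; that sum is computed in closed form. *)

Lemma normrM_le_mean_square (R : realFieldType) (x y : R) :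
  `|x * y| <= (x ^+ 2 + y ^+ 2) / 2.
Proof.
rewrite normrM -(real_normK (num_real x)) -(real_normK (num_real y)).
by case: (real_leif_mean_square (normr_real x) (normr_real y)).
Qed.

Lemma norm_sum_mul_perm_le (R : realFieldType) (I : finType) (a : I -> R)
    (g : I -> I) :
  injective g -> `|\sum_i a i * a (g i)| <= \sum_i a i ^+ 2.
Proof.
move=> inj_g; apply: (le_trans (ler_norm_sum _ _ _)).
apply: (@le_trans _ _ (\sum_i (a i ^+ 2 + a (g i) ^+ 2) / 2)).
  by apply: ler_sum => i _; apply: normrM_le_mean_square.
have sum_sqr_g : \sum_i a (g i) ^+ 2 = \sum_i a i ^+ 2.
  by rewrite [RHS](reindex_inj inj_g).
by rewrite -mulr_suml big_split /= sum_sqr_g; lra.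
Qed.

(* The value ((r/p)) for a residue 0 <= r < p. *)
Definition sawtooth_res (p : nat) (r : int) : rat :=
  if r == 0 then 0 else r%:~R / p%:R - 2^-1.

Section Residues.

Variable p : nat.
Hypothesis p_gt0 : (0 < p)%N.

Lemma sawtooth_divz (m : int) :
  sawtooth (m%:~R / p%:R) = sawtooth_res p (m %% p)%Z.
Proof.
have pR_gt0 : (0 : rat) < p%:R by rewrite ltr0n.
set d := (m %/ p)%Z; set r := (m %% p)%Z.
have r_ge0 : 0 <= r by apply: modz_ge0; lia.
have r_ltp : r < p%:Z by apply: ltz_pmod; rewrite ltz_nat.
have -> : (m%:~R / p%:R : rat) = d%:~R + r%:~R / p%:R.
  rewrite {1}(divz_eq m p) -/d -/r rmorphD rmorphM /= mulrDl.
  by rewrite -[(p%:Z)%:~R]/(p%:R : rat) mulfK ?gt_eqF.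
rewrite /sawtooth /sawtooth_res; clearbody d r.
have [->|r_neq0] := eqVneq r 0; first by rewrite mul0r addr0 rpred_int.
have frac_gt0 : (0 : rat) < r%:~R / p%:R.
  by rewrite divr_gt0 // ltr0z lt_neqAle eq_sym r_neq0.
have frac_lt1 : r%:~R / p%:R < (1 : rat).
  by rewrite ltr_pdivrMr // mul1r -[p%:R]/((p%:Z)%:~R : rat) ltr_int.
have floorE : Num.floor (d%:~R + r%:~R / p%:R : rat) = d.
  by apply: floor_def; rewrite rmorphD /= lerDl ltrD2l (ltW frac_gt0) frac_lt1.
rewrite intrEfloor floorE eq_sym -subr_eq0 addrAC subrr add0r (gt_eqF frac_gt0).
by ring.
Qed.

Lemma mulz_modp_ltn (q : int) (i : nat) : (`|(q * i%:Z) %% p|%Z < p)%N.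
Proof. by rewrite -ltz_nat gez0_abs ?modz_ge0 ?ltz_pmod //; lia. Qed.

Definition mulz_modp (q : int) (i : 'I_p) : 'I_p := Ordinal (mulz_modp_ltn q i).

Lemma mulz_modpE (q : int) (i : 'I_p) :
  (mulz_modp q i)%:Z = ((q * i%:Z) %% p)%Z.
Proof. by rewrite /= gez0_abs ?modz_ge0 //; lia. Qed.

Lemma modz_ord (i : 'I_p) : (i%:Z %% p)%Z = i.
Proof. by rewrite modz_small // ltz_nat ltn_ord. Qed.

Lemma mulz_modp_inj (q : int) : coprimez q p -> injective (mulz_modp q).
Proof.
move=> coprime_qp i j /(congr1 (fun k : 'I_p => (k : nat)%:Z)).
rewrite !mulz_modpE => /eqP.
rewrite eqz_mod_dvd -mulrBr Gauss_dvdzr 1?coprimez_sym // -eqz_mod_dvd.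
by rewrite !modz_ord => /eqP[] /val_inj.
Qed.

Lemma defpq_perm (q : int) :
  defpq p q = - (4 * p%:R) *
    \sum_(i < p) sawtooth_res p i * sawtooth_res p (mulz_modp q i).
Proof.
rewrite /defpq big_mkord; congr (_ * _); apply: eq_bigr => i _.
by rewrite -[(i%:R : rat)]/((i%:Z)%:~R : rat) !sawtooth_divz modz_ord mulz_modpE.
Qed.

Lemma defpq1_sqr :
  defpq p 1 = - (4 * p%:R) * \sum_(i < p) sawtooth_res p i ^+ 2.
Proof.
rewrite defpq_perm; congr (_ * _); apply: eq_bigr => i _.
by rewrite mulz_modpE mul1r modz_ord expr2.
Qed.

End Residues.

Lemma sum_sqr_shift (P : rat) (n : nat) : P != 0 ->
  \sum_(i < n) ((i.+1)%:R / P - 2^-1) ^+ 2 =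
  n%:R * (n.+1)%:R * (2 * n%:R + 1) / (6 * P ^+ 2)
  - n%:R * (n.+1)%:R / (2 * P) + n%:R / 4.
Proof.
move=> P_neq0; elim: n => [|n IHn]; first by rewrite big_ord0; field.
by rewrite big_ord_recr /= IHn -!natr1; field; rewrite P_neq0.
Qed.

Lemma sum_sawtooth_res_sqr (p : nat) : (0 < p)%N ->
  \sum_(i < p) sawtooth_res p i ^+ 2 = (p%:R - 1) * (p%:R - 2) / (12 * p%:R).
Proof.
case: p => [//|n] _; rewrite big_ord_recl /sawtooth_res /= expr0n add0r.
rewrite (eq_bigr (fun i : 'I_n => ((i.+1)%:R / n.+1%:R - 2^-1) ^+ 2)) //.
by rewrite sum_sqr_shift ?pnatr_eq0 // -!natr1; field; rewrite natr1 pnatr_eq0.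
Qed.

Theorem mainTheorem3 (p : nat) (q : int) :
  prime p -> coprimez q p%:Z ->
  `|defpq p q| <= `|defpq p 1| /\
  `|defpq p 1| = 3^-1 * (p%:R - 1) * (p%:R - 2).
Proof.
move=> prime_p coprime_qp.
have p_gt1 := prime_gt1 prime_p; have p_gt0 := ltnW p_gt1.
have pR_ge2 : (2 : rat) <= p%:R by rewrite ler_nat.
have sum_ge0 : 0 <= \sum_(i < p) sawtooth_res p i ^+ 2.
  by apply: sumr_ge0 => i _; apply: sqr_ge0.
split.
  rewrite defpq_perm // defpq1_sqr // !normrM ler_wpM2l // (ger0_norm sum_ge0).
  exact/norm_sum_mul_perm_le/mulz_modp_inj.
rewrite defpq1_sqr // sum_sawtooth_res_sqr //.
have -> : - (4 * p%:R) * ((p%:R - 1) * (p%:R - 2) / (12 * p%:R)) =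
          - (3^-1 * (p%:R - 1) * (p%:R - 2)) :> rat by field; lra.
rewrite normrN ger0_norm //.
by apply: mulr_ge0; [apply: mulr_ge0 |]; lra.
Qed.
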